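(* For all policies $\pi,\pi'\in\Pi$: if $\mathbf{Z}^{\pi}\succ_d\mathbf{Z}^{\pi'}$ then $\mathbf{V}^{\pi}\succ_p\mathbf{V}^{\pi'}$.
   Context: $\Pi$ is a family of policies of a multi-objective sequential decision problem (e.g. a multi-objective Markov decision process with $d$ objectives, vector reward $\mathbf{r}_t\in\mathbb{R}^d$ and discount $\gamma$). For $\pi\in\Pi$, $\mathbf{Z}^{\pi}=(Z^\pi_1,\dots,Z^\pi_d)^T$ is the random return vector $\sum_{t\ge0}\gamma^t\mathbf{r}_t$ obtained by following $\pi$, and $\mathbf{V}^\pi=\mathbb{E}[\mathbf{Z}^\pi]$ is its (finite) expected value. For $\mathbf{x},\mathbf{y}\in\mathbb{R}^d$: $\mathbf{y}\preceq_p\mathbf{x}$ iff $y_i\le x_i$ for all $i$; $\mathbf{x}\succ_p\mathbf{y}$ (Pareto dominance) iff $x_i\ge y_i$ for all $i$ and $x_i>y_i$ for some $i$. CDF: $F_{\mathbf{X}}(\mathbf{x})=P(\mathbf{X}\preceq_p\mathbf{x})$. $\mathbf{X}\succeq_{\mathrm{FSD}}\mathbf{Y}$ iff $F_{\mathbf{X}}\le F_{\mathbf{Y}}$ pointwise; $\mathbf{X}\succ_{\mathrm{FSD}}\mathbf{Y}$ iff additionally $F_{\mathbf{X}}(\mathbf{v})<F_{\mathbf{Y}}(\mathbf{v})$ for some $\mathbf{v}$ (same for real random variables). Distributional dominance $\mathbf{X}\succ_d\mathbf{Y}$: $\mathbf{X}\succeq_{\mathrm{FSD}}\mathbf{Y}$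 and $X_i\succ_{\mathrm{FSD}}Y_i$ for some $i\in\{1,\dots,d\}$. *)

From mathcomp Require Import all_boot all_order all_algebra.
From mathcomp Require Import all_classical all_reals all_analysis.
Set Implicit Arguments. Unset Strict Implicit. Unset Printing Implicit Defensive.
Import Order.TTheory GRing.Theory Num.Theory.
Local Open Scope classical_set_scope.
Local Open Scope ring_scope.

Definition cdfv {dT : measure_display} {T : measurableType dT} {R : realType}
  (P : probability T R) {d : nat} (X : T -> 'I_d -> R) (x : 'I_d -> R) : \bar R :=
  P [set w | forall i, X w i <= x i].

Definition cdf1 {dT : measure_display} {T : measurableType dT} {R : realType}
  (P : probability T R) (X : T -> R) (t : R) : \bar R :=
  P [set w | X w <= t].

(* X >=_FSD Y  iff  F_X <= F_Y pointwise (given the CDFs F = F_X, G = F_Y). *)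
Definition fsd_ge {A : Type} {R : realType} (F G : A -> \bar R) : Prop :=
  forall x, (F x <= G x)%E.

Definition fsd_gt {A : Type} {R : realType} (F G : A -> \bar R) : Prop :=
  fsd_ge F G /\ exists v, (F v < G v)%E.

Definition dist_dom {dT dU : measure_display} {T : measurableType dT}
  {U : measurableType dU} {R : realType} {d : nat}
  (P : probability T R) (X : T -> 'I_d -> R)
  (Q : probability U R) (Y : U -> 'I_d -> R) : Prop :=
  fsd_ge (cdfv P X) (cdfv Q Y) /\
  exists i : 'I_d, fsd_gt (cdf1 P (fun w => X w i)) (cdf1 Q (fun w => Y w i)).

Definition pareto_dom {R : realType} {d : nat} (x y : 'I_d -> R) : Prop :=
  (forall i, y i <= x i) /\ exists i, y i < x i.

Definition expect_vec {dT : measure_display} {T : measurableType dT} {R : realType}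
  (P : probability T R) {d : nat} (X : T -> 'I_d -> R) : 'I_d -> R :=
  fun i => fine (\int[P]_w (X w i)%:E)%E.

From mathcomp Require Import all_boot all_order all_algebra.
From mathcomp Require Import all_classical all_reals all_analysis.
From mathcomp Require Import lra measurable_realfun.
Set Implicit Arguments. Unset Strict Implicit. Unset Printing Implicit Defensive.
Import Order.TTheory GRing.Theory Num.Theory.
Local Open Scope classical_set_scope.
Local Open Scope ring_scope.

(* Joint first-order stochastic dominance passes to each marginal, because the
   marginal CDF F_{X_j}(t) is the increasing limit of the joint CDF at the
   point with j-th coordinate t and all other coordinates n.  For an integrable
   real variable, E[X] = int_0^oo (1 - F_X) - int_-oo^0 F_X, so F_X <= F_Y gives
   E[Y] <= E[X].  If moreover F_X(v) < F_Y(v), right continuity of F_X and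
   monotonicity of F_Y keep a positive gap on an interval ]v, v + delta[, which
   makes one of the two integrals strictly larger. *)

Section integral_gap.
Local Open Scope ereal_scope.
Context d (T : measurableType d) (R : realType) (mu : {measure set T -> \bar R}).

Lemma ge0_le_integral_gap (D A : set T) (f g : T -> \bar R) (e : R) :
  measurable D -> measurable A -> A `<=` D -> (0 <= e)%R ->
  (forall t, D t -> 0 <= f t) -> measurable_fun D f -> measurable_fun D g ->
  (forall t, D t -> f t <= g t) -> (forall t, A t -> f t + e%:E <= g t) ->
  \int[mu]_(t in D) f t + e%:E * mu A <= \int[mu]_(t in D) g t.
Proof.
move=> mD mA AD e0 f0 mf mg fg feg.
have m1A : measurable_fun D (fun t => (\1_A t : R)%:E).
  by apply/measurable_EFinP; exact: measurable_indic.
have me : measurable_fun D (fun t => (e * \1_A t)%:E).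
  by apply/measurable_EFinP/measurable_funM => //; exact: measurable_indic.
have e0A t : D t -> 0 <= (e * \1_A t)%:E by move=> _; rewrite lee_fin mulr_ge0.
rewrite -(setIidl AD) -integral_indic // -ge0_integralZl_EFin //.
under [X in _ + X]eq_integral do rewrite -EFinM.
rewrite -ge0_integralD //; apply: ge0_le_integral => //.
- by move=> t Dt; rewrite adde_ge0 ?f0 ?e0A.
- exact: emeasurable_funD.
move=> t Dt; rewrite indicE; have [At|nAt] := boolP (t \in A).
  by rewrite mulr1; apply: feg; rewrite -inE.
by rewrite mulr0 adde0 fg.
Qed.

Lemma ge0_lt_integral_gap (D A : set T) (f g : T -> \bar R) (e : R) :
  measurable D -> measurable A -> A `<=` D -> (0 < e)%R -> 0 < mu A ->
  (forall t, D t -> 0 <= f t) -> measurable_fun D f -> measurable_fun D g ->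
  \int[mu]_(t in D) f t \is a fin_num ->
  (forall t, D t -> f t <= g t) -> (forall t, A t -> f t + e%:E <= g t) ->
  \int[mu]_(t in D) f t < \int[mu]_(t in D) g t.
Proof.
move=> mD mA AD e0 muA0 f0 mf mg ffin fg feg.
apply: (lt_le_trans _ (ge0_le_integral_gap mD mA AD (ltW e0) f0 mf mg fg feg)).
by rewrite lteDl // mule_gt0.
Qed.

End integral_gap.

Lemma lebesgue_measure_itv_oo_gt0 (R : realType) (v δ : R) : (0 < δ)%R ->
  (0 < lebesgue_measure (`]v, (v + δ)%R[%classic : set R))%E.
Proof.
move=> δ0; rewrite lebesgue_measure_itv /= lte_fin ltrDl δ0.
by rewrite -EFinB addrAC subrr add0r lte_fin.
Qed.

Section cdf_comparison.
Local Open Scope ereal_scope.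
Context (R : realType) dT dU (T : measurableType dT) (U : measurableType dU)
  (P : probability T R) (Q : probability U R)
  (X : {RV P >-> R}) (Y : {RV Q >-> R}).

Lemma ccdf_gap_of_cdf_gap (e t : R) :
  cdf X t + e%:E <= cdf Y t -> ccdf Y t + e%:E <= ccdf X t.
Proof.
rewrite !ccdf_1_cdf.
have : cdf X t \is a fin_num by exact: fin_num_measure.
have : cdf Y t \is a fin_num by exact: fin_num_measure.
case: (cdf X t) => // x; case: (cdf Y t) => // y _ _.
rewrite -!EFinB -!EFinD !lee_fin; lra.
Qed.

Lemma cdf_gap_right v : cdf X v < cdf Y v ->
  exists e δ : R, [/\ (0 < e)%R, (0 < δ)%R &
    forall t, (v < t < v + δ)%R -> cdf X t + e%:E <= cdf Y t].
Proof.
have finE (d : measure_display) (T0 : measurableType d) (P0 : probability T0 R)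
    (Z : {RV P0 >-> R}) t : cdf Z t = (fine (cdf Z t))%:E.
  by rewrite fineK // fin_num_measure.
rewrite (finE _ _ _ X) (finE _ _ _ Y) lte_fin -subr_gt0.
set e := (_ - _)%R => e0.
have := @cdf_right_continuous _ _ _ _ X v.
have e20 : (0 < e / 2)%R by rewrite divr_gt0.
rewrite [X in _ --> X](finE _ _ _ X) => /fine_cvgP[_ /cvgrPdist_lt/(_ _ e20)].
move=> [/= δ δ0 near_v].
exists (e / 2)%R, δ; split => // t /andP[vt tvδ].
have /near_v/(_ vt) : (`|v - t| < δ)%R by rewrite ltr_norml; apply/andP; split; lra.
rewrite ltr_norml => /andP[cdfXt _].
have : (fine (cdf Y v) <= fine (cdf Y t))%R.
  by rewrite fine_le ?fin_num_measure //; apply: cdf_nondecreasing; exact: ltW.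
rewrite (finE _ _ _ X t) (finE _ _ _ Y t) -EFinD lee_fin /e in cdfXt *; lra.
Qed.

Hypotheses (LX : (X : T -> R) \in Lfun P 1) (LY : (Y : U -> R) \in Lfun Q 1).
Hypothesis cdf_le : forall t, cdf X t <= cdf Y t.

Let ccdf_le t : ccdf Y t <= ccdf X t.
Proof. by have := @ccdf_gap_of_cdf_gap 0%R t; rewrite !adde0; apply. Qed.

Let mcdf D (d : measure_display) (T0 : measurableType d) (P0 : probability T0 R)
  (Z : {RV P0 >-> R}) : measurable_fun D (cdf Z).
Proof. by apply: (measurable_funS measurableT) => //; exact: cdf_measurable. Qed.

Let mccdf D (d : measure_display) (T0 : measurableType d) (P0 : probability T0 R)
  (Z : {RV P0 >-> R}) : measurable_fun D (ccdf Z).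
Proof. by apply: (measurable_funS measurableT) => //; exact: ccdf_measurable. Qed.

Lemma expectation_le_of_cdf_le : 'E_Q[Y] <= 'E_P[X].
Proof.
rewrite !expectation_cdf_ccdf //; apply: leeB.
- by apply: ge0_le_integral => //; exact: mccdf.
- by apply: ge0_le_integral => //; exact: mcdf.
Qed.

Lemma expectation_lt_of_cdf_lt v : cdf X v < cdf Y v -> 'E_Q[Y] < 'E_P[X].
Proof.
move=> /cdf_gap_right[e [δ [e0 δ0 gap]]].
have := expectation_fin_num LY; have := expectation_fin_num LX.
rewrite !expectation_cdf_ccdf // fin_numB => /andP[_ finX].
rewrite fin_numB => /andP[finY _].
have [v0|v0] := ltP v 0%R.
- pose δ' := Num.min δ (- v)%R.
  (* shrink the gap interval into ]-oo, 0[, the domain of the cdf integral *)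
  have δ'0 : (0 < δ')%R by rewrite lt_min δ0 oppr_gt0.
  apply: lee_ltD finY _ _.
    by apply: ge0_le_integral => //; exact: mccdf.
  rewrite lteN2; apply: (ge0_lt_integral_gap (mu := lebesgue_measure)
    (A := `]v, (v + δ')%R[%classic) (e := e)) => //; try exact: mcdf.
  + move=> t /=; rewrite !in_itv /= => /andP[_ tv]; apply: lt_le_trans tv _.
    by rewrite -lerBrDl sub0r ge_min lexx orbT.
  + exact: lebesgue_measure_itv_oo_gt0.
  + move=> t /=; rewrite in_itv /= => /andP[vt tv]; apply: gap; rewrite vt /=.
    by apply: lt_le_trans tv _; rewrite lerD2l ge_min lexx.
- apply: lte_leB finX _ _; last first.
    by apply: ge0_le_integral => //; exact: mcdf.
  apply: (ge0_lt_integral_gap (mu := lebesgue_measure)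
    (A := `]v, (v + δ)%R[%classic) (e := e)) => //; try exact: mccdf.
  + move=> t /=; rewrite !in_itv /= andbT => /andP[vt _].
    exact: le_trans v0 (ltW vt).
  + exact: lebesgue_measure_itv_oo_gt0.
  + by move=> t /=; rewrite in_itv /= => /gap/ccdf_gap_of_cdf_gap.
Qed.

End cdf_comparison.

Section marginal.
Context (R : realType) (d : nat) dT (T : measurableType dT) (P : probability T R).

Lemma measurable_le_set (f : T -> R) t :
  measurable_fun setT f -> measurable [set w | f w <= t].
Proof.
move=> mf; rewrite -[X in measurable X]setTI.
have -> : [set w | f w <= t] = f @^-1` `]-oo, t] by apply/seteqP; split=> w /=; rewrite in_itv.
exact: mf.
Qed.

Variable X : T -> 'I_d -> R.
Hypothesis mX : forall k, measurable_fun setT (fun w => X w k).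

Lemma measurable_lev_set (x : 'I_d -> R) : measurable [set w | forall k, X w k <= x k].
Proof.
have -> : [set w | forall k, X w k <= x k] = \bigcap_k [set w | X w k <= x k].
  by apply/seteqP; split=> [w h k _|w h k]; exact: h.
apply: fin_bigcap_measurable => [|k _]; first exact: finite_finset.
exact: measurable_le_set.
Qed.

Lemma cdfv_cvg_marginal j t :
  cdfv P X (fun k => if k == j then t else n%:R) @[n --> \oo] -->
  cdf1 P (fun w => X w j) t.
Proof.
rewrite /cdfv /cdf1.
pose S n := [set w | forall k, X w k <= (if k == j then t else n%:R)].
have mS n : measurable (S n) by exact: measurable_lev_set.
have S_nd : nondecreasing_seq S.
  move=> n m nm; apply/subsetPset => w /= h k; apply: le_trans (h k) _.
  by case: eqP => // _; rewrite ler_nat.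
have <- : \bigcup_n S n = [set w | X w j <= t].
  apply/seteqP; split=> [w [n _ /(_ j)]|w wt]; first by rewrite /= eqxx.
  exists (Num.truncn (\sum_k `|X w k|)).+1 => // k; case: eqP => [->//|_].
  apply: le_trans (ltW (truncnS_gt _)); apply: le_trans (ler_norm _) _.
  by rewrite (bigD1 k) //= lerDl sumr_ge0.
exact: nondecreasing_cvg_mu (bigcupT_measurable _ mS) S_nd.
Qed.

End marginal.

Lemma fsd_ge_marginal (R : realType) (d : nat) dT dU (T : measurableType dT)
  (U : measurableType dU) (P : probability T R) (Q : probability U R)
  (X : T -> 'I_d -> R) (Y : U -> 'I_d -> R) :
  (forall k, measurable_fun setT (fun w => X w k)) ->
  (forall k, measurable_fun setT (fun w => Y w k)) ->
  fsd_ge (cdfv P X) (cdfv Q Y) ->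
  forall j, fsd_ge (cdf1 P (fun w => X w j)) (cdf1 Q (fun w => Y w j)).
Proof.
move=> mX mY le j t.
apply: (lee_cvg_to (cdfv_cvg_marginal mX (j:=j) (t:=t))
  (cdfv_cvg_marginal mY (j:=j) (t:=t))).
by apply: nearW => n; exact: le.
Qed.

Section random_variable_of_function.
Context (R : realType) d (T : measurableType d) (P : probability T R).

Lemma cdf_cdf1 (X : {RV P >-> R}) : cdf X =1 cdf1 P X.
Proof. by []. Qed.

Lemma integrable_RV (f : T -> R) :
  P.-integrable setT (fun w => (f w)%:E) ->
  exists2 X : {RV P >-> R}, (X : T -> R) \in Lfun P 1 & X = f :> (T -> R).
Proof.
move=> intf; have /integrableP[/measurable_EFinP mf _] := intf.
by exists (mfun_Sub (mem_set mf) : {RV P >-> R}); first exact/Lfun1_integrable.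
Qed.

End random_variable_of_function.

Section fsd_integral.
Local Open Scope ereal_scope.
Context (R : realType) dT dU (T : measurableType dT) (U : measurableType dU)
  (P : probability T R) (Q : probability U R).

Lemma fsd_ge_integral_le (f : T -> R) (g : U -> R) :
  P.-integrable setT (fun w => (f w)%:E) -> Q.-integrable setT (fun w => (g w)%:E) ->
  fsd_ge (cdf1 P f) (cdf1 Q g) -> \int[Q]_w (g w)%:E <= \int[P]_w (f w)%:E.
Proof.
move=> /integrable_RV[X LX <-] /integrable_RV[Y LY <-] le.
by rewrite -!expectation_def; apply: expectation_le_of_cdf_le => // t; rewrite !cdf_cdf1.
Qed.

Lemma fsd_gt_integral_lt (f : T -> R) (g : U -> R) :
  P.-integrable setT (fun w => (f w)%:E) -> Q.-integrable setT (fun w => (g w)%:E) ->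
  fsd_gt (cdf1 P f) (cdf1 Q g) -> \int[Q]_w (g w)%:E < \int[P]_w (f w)%:E.
Proof.
move=> /integrable_RV[X LX <-] /integrable_RV[Y LY <-] [le [v lt]].
have le' t : cdf X t <= cdf Y t by rewrite !cdf_cdf1.
rewrite -!expectation_def; apply: (expectation_lt_of_cdf_lt LX LY le' (v := v)).
by rewrite !cdf_cdf1.
Qed.

End fsd_integral.

Theorem lemma4p1 (R : realType) (d : nat) (Pi : Type)
  (dO : Pi -> measure_display) (Omega : forall pi : Pi, measurableType (dO pi))
  (P : forall pi : Pi, probability (Omega pi) R)
  (Z : forall pi : Pi, Omega pi -> 'I_d -> R)
  (hint : forall (pi : Pi) (i : 'I_d),
      (P pi).-integrable setT (fun w => (Z pi w i)%:E)) :
  forall pi pi' : Pi,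
    dist_dom (P pi) (Z pi) (P pi') (Z pi') ->
    pareto_dom (expect_vec (P pi) (Z pi)) (expect_vec (P pi') (Z pi')).
Proof.
move=> pi pi' [joint_ge [i marginal_gt]].
have mZ p k : measurable_fun setT (fun w => Z p w k).
  by case/integrableP: (hint p k) => /measurable_EFinP.
have fin p k := integrable_fin_num measurableT (hint p k).
split=> [j|]; last exists i.
- rewrite fine_le ?fin //; apply: fsd_ge_integral_le => //.
  exact: fsd_ge_marginal (mZ pi) (mZ pi') joint_ge j.
- by rewrite fine_lt ?fin //; apply: fsd_gt_integral_lt.
Qed.
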